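(* Let $p_1,p_2>2$ be distinct primes, let $m_1=p_1^{\alpha_1}p_2^{\alpha_2}$ and $m_2=p_1^{\beta_1}p_2^{\beta_2}$ with $\alpha_1,\alpha_2,\beta_1,\beta_2$ positive integers. If $m_1$ is good and $m_1\mid m_2$, then $m_2$ is good.
   Context: For $m=p_1^{\alpha_1}p_2^{\alpha_2}$ with $p_1,p_2>2$ distinct primes and $\alpha_1,\alpha_2\ge1$: let $t=\mathrm{ord}_m(2)$ (the multiplicative order of $2$ modulo $m$) and let $\gamma\in\mathbb{F}_{2^t}^*$ be a primitive $m$th root of unity. The canonical set of $m$ is $S_m=\{s_{01},s_{10},s_{11}\}\subseteq\mathbb{Z}_m$, where for $\sigma=(\sigma_1,\sigma_2)\in\{0,1\}^2\setminus\{(0,0)\}$, $s_\sigma$ is the unique element of $\mathbb{Z}_m$ with $s_\sigma\equiv\sigma_1 \pmod{p_1^{\alpha_1}}$ and $s_\sigma\equiv \sigma_2\pmod{p_2^{\alpha_2}}$. An $S_m$-decoding polynomial is a polynomial $P(X)\in\mathbb{F}_{2^t}[X]$ such that $P(\gamma^s)=0$ for every $s\in S_m$ and $P(1)=1$. The number $m$ is called good if there exists an $S_m$-decoding polynomial with fewer than $4$ monomials (nonzero terms). *)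

From HB Require Import structures.
From mathcomp Require Import all_boot all_order all_algebra all_field.
Set Implicit Arguments. Unset Strict Implicit. Unset Printing Implicit Defensive.
Import GRing.Theory.
Local Open Scope ring_scope.

Definition is_ord2 (m t : nat) : Prop :=
  [/\ (0 < t)%N, (2 ^ t = 1 %[mod m])%N
    & forall k : nat, (0 < k)%N -> (2 ^ k = 1 %[mod m])%N -> (t <= k)%N].

(* Membership in the canonical set S_m of m = q1 * q2 (q1 = p1^a1, q2 = p2^a2):
   s in Z_m (represented by 0 <= s < m) with s = s_sigma for some
   sigma in {0,1}^2 \ {(0,0)}, i.e. s mod q1 = sigma_1, s mod q2 = sigma_2. *)
Definition in_canonical_set (q1 q2 s : nat) : bool :=
  ((s < q1 * q2) &&
     [|| (s %% q1 == 0) && (s %% q2 == 1),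
         (s %% q1 == 1) && (s %% q2 == 0)
       | (s %% q1 == 1) && (s %% q2 == 1)])%N.

Definition decoding_poly (F : fieldType) (q1 q2 : nat) (gamma : F)
    (P : {poly F}) : Prop :=
  P.[1] = 1 /\ forall s : nat, in_canonical_set q1 q2 s -> P.[gamma ^+ s] = 0.

Definition nmonomials (F : fieldType) (P : {poly F}) : nat :=
  count (fun c => c != 0) P.

(* m = p1^a1 * p2^a2 is good: for t = ord_m(2), the field F_{2^t} (any finite
   field with 2^t elements) and any primitive m-th root of unity gamma in it,
   there is an S_m-decoding polynomial with fewer than 4 monomials. *)
Definition good (p1 a1 p2 a2 : nat) : Prop :=
  let q1 := (p1 ^ a1)%N in let q2 := (p2 ^ a2)%N in let m := (q1 * q2)%N in
  forall t : nat, is_ord2 m t ->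
  forall (F : finFieldType) (gamma : F),
    #|F| = (2 ^ t)%N -> m.-primitive_root gamma ->
    exists P : {poly F}, decoding_poly q1 q2 gamma P /\ (nmonomials P < 4)%N.

From HB Require Import structures.
From mathcomp Require Import all_boot all_order all_algebra all_field cyclic.
Set Implicit Arguments. Unset Strict Implicit. Unset Printing Implicit Defensive.
Import GRing.Theory.
Local Open Scope ring_scope.

(* Let m1 | m2 and t_i = ord_(m_i)(2); then t1 | t2, so F_(2^t2) contains the
   fixed field K of x |-> x^(2^t1), which has 2^t1 elements and contains
   delta = gamma^(m2/m1), a primitive m1-th root of unity.  If P over K decodes
   S_m1 with respect to delta, then P(X^(m2/m1)) has as many monomials, and it
   decodes S_m2 with respect to gamma because s in S_m2 reduces modulo m1 to an
   element of S_m1. *)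

Lemma predn_dvd_predn_exp a c : (0 < a)%N -> (a.-1 %| (a ^ c).-1)%N.
Proof.
move=> a_gt0; rewrite -!subn1 -eqn_mod_dvd ?expn_gt0 ?a_gt0 //; apply/eqP.
by rewrite -modnXm -{1}(subnK a_gt0) modnDl modnXm exp1n.
Qed.

Lemma dvdp_XnS_subX (R : idomainType) a b :
  (a %| b)%N -> ('X^(a.+1) - 'X : {poly R}) %| 'X^(b.+1) - 'X.
Proof.
move=> /dvdnP[c ->].
have XnS_subX n : 'X^(n.+1) - 'X = 'X * ('X^n - 1) :> {poly R}.
  by rewrite exprS mulrBr mulr1.
rewrite !XnS_subX dvdp_mul2l ?polyX_eq0 // mulnC exprM -{2}(expr1n _ c) subrXX.
exact: dvdp_mulIl.
Qed.

Section FrobeniusFixedField.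

Variables (F : finFieldType) (p : nat) (pcharF : p \in [pchar F]) (k : nat).

(* The proof of [p \in [pchar F]] is a phantom argument that lets the
   [divring_closed] instance below be inferred from the predicate alone. *)
Definition frobenius_fixed of p \in [pchar F] : {pred F} :=
  fun x => x ^+ (p ^ k)%N == x.

Lemma frobenius_fixed_divring_closed : divring_closed (frobenius_fixed pcharF).
Proof.
have pchar_pk : [pchar F].-nat (p ^ k)%N.
  by rewrite pnatX (pnatE _ (pcharf_prime pcharF)) pcharF.
split => [|x y|x y]; rewrite -!topredE /frobenius_fixed /= ?expr1n //.
  by move=> /eqP fx /eqP fy; rewrite exprDn_pchar // exprNn_pchar // fx fy.
by move=> /eqP fx /eqP fy; rewrite exprMn exprVn fx fy.
Qed.

HB.instance Definition _ := GRing.isDivringClosed.Build F (frobenius_fixed pcharF)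
  frobenius_fixed_divring_closed.

Record fixed_field : predArgType :=
  FixedField { fixed_val :> F; _ : fixed_val \in frobenius_fixed pcharF }.

HB.instance Definition _ := [isSub for fixed_val].
HB.instance Definition _ := [Countable of fixed_field by <:].
HB.instance Definition _ := [Finite of fixed_field by <:].
HB.instance Definition _ := [SubChoice_isSubIntegralDomain of fixed_field by <:].
HB.instance Definition _ := [SubIntegralDomain_isSubField of fixed_field by <:].

Lemma card_fixed_field n : #|F| = (p ^ n)%N -> (k %| n)%N -> #|fixed_field| = (p ^ k)%N.
Proof.
move=> cardF k_dvd_n.
have p_gt1 := prime_gt1 (pcharf_prime pcharF).
have n_gt0 : (0 < n)%N.
  by rewrite lt0n; apply: contraTneq (finNzRing_gt1 F) => n0; rewrite cardF n0.
have pk_gt1 : (1 < p ^ k)%N.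
  by rewrite -{1}(expn0 p) ltn_exp2l // (dvdn_gt0 n_gt0 k_dvd_n).
have size_q : size ('X^(p ^ k) - 'X : {poly F}) = (p ^ k).+1.
  by rewrite size_polyDl size_polyXn // size_polyN size_polyX.
have /dvdp_prod_XsubC[s Es] : (('X^(p ^ k) - 'X : {poly F}) %| \prod_x ('X - x%:P)).
  have pn_gt0 : (0 < p ^ n)%N by rewrite expn_gt0 ltnW.
  rewrite -finField_genPoly cardF -(prednK (ltnW pk_gt1)) -(prednK pn_gt0).
  rewrite dvdp_XnS_subX //.
  by case/dvdnP: k_dvd_n => c ->; rewrite mulnC expnM predn_dvd_predn_exp // ltnW.
have s_uniq : uniq (mask s (index_enum F)) by rewrite mask_uniq // index_enum_uniq.
rewrite card_sub -[RHS]/((p ^ k).+1.-1) -size_q (eqp_size Es) size_prod_XsubC.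
rewrite -(card_uniqP s_uniq); apply: eq_card => x.
by rewrite !inE /frobenius_fixed -root_prod_XsubC -(eqp_root Es) /root !hornerE subr_eq0.
Qed.

Lemma unity_root_frobenius_fixed m (z : F) :
  z ^+ m = 1 -> (p ^ k = 1 %[mod m])%N -> z \in frobenius_fixed pcharF.
Proof.
move=> zm1 pk_mod.
by rewrite -topredE /frobenius_fixed /= -(expr_mod _ zm1) pk_mod expr_mod.
Qed.

End FrobeniusFixedField.

Section Monomials.

Variable F : fieldType.
Implicit Types (p q : {poly F}) (c : F).

Lemma nmonomials_MXaddC p c : nmonomials (p * 'X + c%:P) = ((c != 0%R) + nmonomials p)%N.
Proof.
rewrite -cons_poly_def /nmonomials polyseq_cons.
case: nilP => [p_nil | _] //=.
by rewrite p_nil polyseqC addn0 count_nseq; case: (c != 0).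
Qed.

Lemma nmonomials_mulXn p n : nmonomials (p * 'X^n) = nmonomials p.
Proof.
have [->|p_neq0] := eqVneq p 0; first by rewrite mul0r.
by rewrite /nmonomials polyseqMXn // -cat_nseq count_cat count_nseq eqxx.
Qed.

Lemma nmonomials_comp_Xn p d : (0 < d)%N -> nmonomials (p \Po 'X^d) = nmonomials p.
Proof.
move=> d_gt0; elim/poly_ind: p => [|p c IHp]; first by rewrite comp_poly0.
rewrite comp_polyD comp_polyM comp_polyX comp_polyC -{2}(prednK d_gt0) exprSr mulrA.
by rewrite !nmonomials_MXaddC nmonomials_mulXn IHp.
Qed.

End Monomials.

Lemma nmonomials_map_poly (K F : fieldType) (f : {rmorphism K -> F}) (p : {poly K}) :
  nmonomials (map_poly f p) = nmonomials p.
Proof.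
elim/poly_ind: p => [|p c IHp]; first by rewrite map_poly0 /nmonomials !polyseq0.
by rewrite rmorphD rmorphM /= map_polyX map_polyC !nmonomials_MXaddC IHp fmorph_eq0.
Qed.

Lemma is_ord2_exists m : (0 < m)%N -> coprime 2 m -> exists t, is_ord2 m t.
Proof.
move=> m_gt0 coprime_2m.
have ex_t : exists t, (0 < t)%N && (2 ^ t == 1 %[mod m])%N.
  by exists (totient m); rewrite totient_gt0 m_gt0; apply/eqP/Euler_exp_totient.
have [t /andP[t_gt0 /eqP t_ord] t_min] := ex_minnP ex_t.
by exists t; split => // k k_gt0 k_ord; apply: t_min; rewrite k_gt0 k_ord eqxx.
Qed.

Lemma is_ord2_dvd m t k : is_ord2 m t -> (0 < k)%N -> (2 ^ k = 1 %[mod m])%N -> (t %| k)%N.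
Proof.
case=> t_gt0 t_ord t_min k_gt0 k_ord.
have r_ord : (2 ^ (k %% t) = 1 %[mod m])%N.
  have q_ord : (2 ^ (k %/ t * t) = 1 %[mod m])%N.
    by rewrite mulnC expnM -modnXm t_ord modnXm exp1n.
  by move: k_ord; rewrite {1}(divn_eq k t) expnD -modnMml q_ord modnMml mul1n.
rewrite /dvdn; have [//|r_gt0] := posnP (k %% t).
by have := t_min _ r_gt0 r_ord; rewrite leqNgt ltn_pmod.
Qed.

Lemma is_ord2_dvdn m1 m2 t1 t2 :
  (m1 %| m2)%N -> is_ord2 m1 t1 -> is_ord2 m2 t2 -> (t1 %| t2)%N.
Proof.
move=> m1_dvd_m2 ord_t1 [t2_gt0 two_t2 _]; apply: is_ord2_dvd ord_t1 t2_gt0 _.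
by rewrite -(modn_dvdm _ m1_dvd_m2) two_t2 modn_dvdm.
Qed.

Lemma dvdn_coprime_factors q1 q2 Q1 Q2 :
    coprime q1 Q2 -> coprime q2 Q1 -> (q1 * q2 %| Q1 * Q2)%N ->
  ((q1 %| Q1) && (q2 %| Q2))%N.
Proof.
move=> coprime_q1Q2 coprime_q2Q1 q_dvd.
rewrite -(Gauss_dvdl _ coprime_q1Q2) -(Gauss_dvdr _ coprime_q2Q1).
rewrite (dvdn_trans (dvdn_mulr q2 (dvdnn q1)) q_dvd).
by rewrite (dvdn_trans (dvdn_mull q1 (dvdnn q2)) q_dvd).
Qed.

Lemma in_canonical_set_modn q1 q2 Q1 Q2 s :
    (1 < q1)%N -> (1 < q2)%N -> (q1 %| Q1)%N -> (q2 %| Q2)%N ->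
  in_canonical_set Q1 Q2 s -> in_canonical_set q1 q2 (s %% (q1 * q2)).
Proof.
move=> q1_gt1 q2_gt1 q1_dvd q2_dvd /andP[_ s_canon].
rewrite /in_canonical_set ltn_pmod ?muln_gt0 ?(ltnW q1_gt1) ?(ltnW q2_gt1) //=.
rewrite !(modn_dvdm s (dvdn_mulr q2 (dvdnn q1))) !(modn_dvdm s (dvdn_mull q1 (dvdnn q2))).
rewrite -(modn_dvdm s q1_dvd) -(modn_dvdm s q2_dvd).
by case/or3P: s_canon => /andP[/eqP -> /eqP ->]; rewrite ?mod0n ?modn_small ?eqxx ?orbT.
Qed.

Lemma decoding_poly_comp_Xn (K F : fieldType) (f : {rmorphism K -> F})
    q1 q2 Q1 Q2 (delta : K) (gamma : F) d (P : {poly K}) :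
    (1 < q1)%N -> (1 < q2)%N -> (q1 %| Q1)%N -> (q2 %| Q2)%N ->
    delta ^+ (q1 * q2) = 1 -> f delta = gamma ^+ d ->
  decoding_poly q1 q2 delta P -> decoding_poly Q1 Q2 gamma (map_poly f P \Po 'X^d).
Proof.
move=> q1_gt1 q2_gt1 q1_dvd q2_dvd delta_unity f_delta [P1 P_canon].
split => [|s s_canon]; rewrite horner_comp hornerXn.
  by rewrite expr1n -(rmorph1 f) horner_map P1 rmorph1.
rewrite -exprM mulnC exprM -f_delta -rmorphXn horner_map -(expr_mod _ delta_unity).
by rewrite P_canon ?rmorph0 // (in_canonical_set_modn _ _ q1_dvd q2_dvd).
Qed.

Theorem theorem3 (p1 p2 a1 a2 b1 b2 : nat) :
  prime p1 -> prime p2 -> (2 < p1)%N -> (2 < p2)%N -> p1 != p2 ->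
  (0 < a1)%N -> (0 < a2)%N -> (0 < b1)%N -> (0 < b2)%N ->
  good p1 a1 p2 a2 ->
  (p1 ^ a1 * p2 ^ a2 %| p1 ^ b1 * p2 ^ b2)%N ->
  good p1 b1 p2 b2.
Proof.
move=> p1_prime p2_prime p1_gt2 p2_gt2 p1_neq_p2 a1_gt0 a2_gt0 _ _ good_m1 m1_dvd_m2.
move=> t2 ord_t2 F gamma cardF gamma_prim.
set q1 := (p1 ^ a1)%N in m1_dvd_m2 *; set q2 := (p2 ^ a2)%N in m1_dvd_m2 *.
set Q1 := (p1 ^ b1)%N in m1_dvd_m2 *; set Q2 := (p2 ^ b2)%N in m1_dvd_m2 *.
set m1 := (q1 * q2)%N in m1_dvd_m2 *; set m2 := (Q1 * Q2)%N in m1_dvd_m2 *.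
have q1_gt1 : (1 < q1)%N by rewrite -(expn0 p1) ltn_exp2l // ltnW.
have q2_gt1 : (1 < q2)%N by rewrite -(expn0 p2) ltn_exp2l // ltnW.
have m1_gt0 : (0 < m1)%N by rewrite muln_gt0 (ltnW q1_gt1) (ltnW q2_gt1).
have coprime_p1p2 : coprime p1 p2 by rewrite prime_coprime // dvdn_prime2.
have /andP[q1_dvd q2_dvd] : ((q1 %| Q1) && (q2 %| Q2))%N.
  apply: dvdn_coprime_factors m1_dvd_m2; apply/coprimeXl/coprimeXr => //.
  by rewrite coprime_sym.
have odd_gt2 p : prime p -> (2 < p)%N -> odd p by move=> /even_prime[->|->].
have [t1 ord_t1] : exists t1, is_ord2 m1 t1.
  apply: is_ord2_exists m1_gt0 _.
  by rewrite coprimeMr !coprime_pexpr // !coprime2n !odd_gt2.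
have [_ two_t1 _] := ord_t1.
have pchar2 : 2%N \in [pchar F] := card_finPcharP cardF (isT : prime 2).
have gamma_d_prim := dvdn_prim_root gamma_prim m1_dvd_m2.
have gamma_d_fixed :=
  unity_root_frobenius_fixed pchar2 (prim_expr_order gamma_d_prim) two_t1.
pose delta : fixed_field pchar2 t1 := FixedField gamma_d_fixed.
have delta_prim : m1.-primitive_root delta by rewrite -(fmorph_primitive_root val).
have cardK := card_fixed_field pchar2 cardF (is_ord2_dvdn m1_dvd_m2 ord_t1 ord_t2).
have [P [P_dec P_small]] := good_m1 t1 ord_t1 _ delta cardK delta_prim.
exists (map_poly val P \Po 'X^(m2 %/ m1)); split.
  exact: (decoding_poly_comp_Xn (f := val) q1_gt1 q2_gt1 q1_dvd q2_dvd
           (prim_expr_order delta_prim) (erefl _) P_dec).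
by rewrite nmonomials_comp_Xn ?(nmonomials_map_poly val) // divn_gt0 // dvdn_leq
  ?(prim_order_gt0 gamma_prim).
Qed.
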